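(* Let $H=(V,E)$ be a hypergraph whose vertex set $V$ is a partition of $[n]$ into sets of cardinality at least $2$. Choose $\bar i_I\in I$ for each $I\in V$ and let $R=\{\bar i_I\}_{I\in V}$, and let $\mathcal{J}^H|_R=\{J\in\mathcal{J}^H: J\subseteq R\}$. Then the map $J\mapsto E(J)$ is a bijection from $\mathcal{J}^H|_R$ onto $L(V)\cup E$, and the linear map $w\mapsto z$ defined by $z_{E(J)}=w_J$ for all $J\in\mathcal{J}^H|_R$ is a one-to-one correspondence between $\operatorname{proj}_{\mathcal{J}^H|_R}\mathrm{MC}^H$ and $\mathrm{MP}^H$.
   Context: Let $n$ be a positive integer, $[n]=\{1,\dots,n\}$. A hypergraph $H=(V,E)$ here has as vertex set $V$ a family of pairwise disjoint subsets of $[n]$, each of cardinality at least $2$, and hyperedge set $E$ consisting of subsets $e\subseteq V$ with $|e|\ge 2$. Write $L(V)=\{\{I\}: I\in V\}$. For a nonempty $e\subseteq V$, $\mathcal{J}^e$ denotes the family of sets $J\subseteq \bigcup_{I\in e} I$ with $|J\cap I|=1$ for every $I\in e$. Let $\mathcal{J}^H=\bigcup_{e\in L(V)\cup E}\mathcal{J}^e$. For $J$ with $|J\cap I|\le 1$ for all $I\in V$, $E(J)=\{I\in V: |J\cap I|=1\}$. For $w\in\mathbb{R}^{\mathcal{J}^H}$ write $w_i=w_{\{i\}}$ and $w(A)=\sum_{i\in A}w_i$. Let $\mathscr{S}^H=\{w\in\{0,1\}^{\mathcal{J}^H}: w(I)=1\ \forall I\in V;\ w_J=\prod_{i\in J}w_i\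 \forall J\in\mathcal{J}^H, |J|>1\}$ and $\mathrm{MC}^H=\operatorname{conv}\mathscr{S}^H$. The multilinear set is $\mathcal{S}^H=\{z\in\{0,1\}^{L(V)\cup E}: z_e=\prod_{I\in e}z_I\ \forall e\in E\}$, with $z_I=z_{\{I\}}$, and $\mathrm{MP}^H=\operatorname{conv}\mathcal{S}^H$. For a finite index set $S'\subseteq S$, $\operatorname{proj}_{S'}$ extracts the coordinates indexed by $S'$ (applied elementwise to sets). *)

(* Ground set [n] is modelled by 'I_n (relabeling 1..n -> 0..n-1). *)
From mathcomp Require Import all_boot all_order all_algebra.
Set Implicit Arguments. Unset Strict Implicit. Unset Printing Implicit Defensive.
Import Order.TTheory GRing.Theory Num.Theory.
Local Open Scope ring_scope.

Section Hyper.
Variable n : nat.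
Variable R : realFieldType.

Definition LV (V : {set {set 'I_n}}) : {set {set {set 'I_n}}} :=
  [set [set I] | I in V].

Definition Jfam (e : {set {set 'I_n}}) : {set {set 'I_n}} :=
  [set J : {set 'I_n} | (J \subset \bigcup_(I in e) I)
                        && [forall I in e, #|J :&: I| == 1%N]].

Definition JH (V : {set {set 'I_n}}) (E : {set {set {set 'I_n}}}) :
  {set {set 'I_n}} := \bigcup_(e in LV V :|: E) Jfam e.

Definition EJ (V : {set {set 'I_n}}) (J : {set 'I_n}) : {set {set 'I_n}} :=
  [set I in V | #|J :&: I| == 1%N].

(* Vectors in R^S (S a finite index subset of a finite type T) are modelled as
   functions T -> R vanishing outside S. *)

Definition inSH (V : {set {set 'I_n}}) (E : {set {set {set 'I_n}}})
  (w : {set 'I_n} -> R) : Prop :=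
  [/\ (forall J, J \notin JH V E -> w J = 0),
      (forall J, J \in JH V E -> w J = 0 \/ w J = 1),
      (forall I, I \in V -> \sum_(i in I) w [set i] = 1)
    & (forall J, J \in JH V E -> (1 < #|J|)%N -> w J = \prod_(i in J) w [set i])].

(* the multilinear set S^H (z_I := z_{{I}}) *)
Definition inMS (V : {set {set 'I_n}}) (E : {set {set {set 'I_n}}})
  (z : {set {set 'I_n}} -> R) : Prop :=
  [/\ (forall e, e \notin LV V :|: E -> z e = 0),
      (forall e, e \in LV V :|: E -> z e = 0 \/ z e = 1)
    & (forall e, e \in E -> z e = \prod_(I in e) z [set I])].

End Hyper.

Definition conv (R : realFieldType) (T : Type) (S : (T -> R) -> Prop) :
  (T -> R) -> Prop :=
  fun x => exists (m : nat) (p : 'I_m -> T -> R) (l : 'I_m -> R),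
    [/\ (forall k, S (p k)), (forall k, 0 <= l k), \sum_k l k = 1
      & (forall t, x t = \sum_k l k * p k t)].

Definition MC (R : realFieldType) {n : nat} V E : ({set 'I_n} -> R) -> Prop :=
  conv (@inSH n R V E).
Definition MP (R : realFieldType) {n : nat} V E : ({set {set 'I_n}} -> R) -> Prop :=
  conv (@inMS n R V E).

Definition JHR (n : nat) (V : {set {set 'I_n}}) (E : {set {set {set 'I_n}}})
  (ibar : {set 'I_n} -> 'I_n) : {set {set 'I_n}} :=
  [set J in JH V E | J \subset [set ibar I | I in V]].

Definition proj (R : realFieldType) (T : finType) (S' : {set T}) (w : T -> R) :
  T -> R := fun J => if J \in S' then w J else 0.

(* the linear map w |-> z with z_{E(J)} = w_J for J in S' (J |-> E(J) being
   injective on S', the sum has at most one term) *)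
Definition phi (R : realFieldType) (n : nat) (V : {set {set 'I_n}})
  (S' : {set {set 'I_n}}) (w : {set 'I_n} -> R) : {set {set 'I_n}} -> R :=
  fun e => \sum_(J in S' | EJ V J == e) w J.

Arguments MC R {n} V E _.
Arguments MP R {n} V E _.

From Stdlib Require Import FunctionalExtensionality.
From mathcomp Require Import all_boot all_order all_algebra.
Set Implicit Arguments. Unset Strict Implicit. Unset Printing Implicit Defensive.
Import Order.TTheory GRing.Theory Num.Theory.
Local Open Scope ring_scope.

(* Since the blocks of V are disjoint, every J in J^H|_R is the set of
   representatives {ibar I : I in e} of exactly one e in L(V) u E, and E(J) = e.
   Hence w |-> z merely reads off w on these sets and is linear. A point of S^H
   is sent into the multilinear set because w_J is the product of the
   w_{ibar I}. Conversely, a point z of the multilinear set lifts to the point of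
   S^H that selects in each block I the element ibar I when z_I = 1, and another
   element of I (there is one, as |I| >= 2) when z_I = 0. Both maps commute with
   convex combinations, so they pass to the convex hulls. *)

Lemma prod_indicator (R : comPzSemiRingType) (T : finType) (A B : {set T}) :
  \prod_(i in A) (i \in B)%:R = (A \subset B)%:R :> R.
Proof.
have [AB | /subsetPn [i iA iB]] := boolP (A \subset B).
  by rewrite big1 // => i /(subsetP AB) ->.
by rewrite (bigD1 i) //= (negbTE iB) mul0r.
Qed.

Section ConvexImage.
Variables (R : realFieldType) (T U : Type).
Variables (S : (T -> R) -> Prop) (S' : (U -> R) -> Prop) (f : (T -> R) -> U -> R).

Definition preserves_combinations :=
  forall m (p : 'I_m -> T -> R) (l : 'I_m -> R) x,
    (forall t, x t = \sum_k l k * p k t) -> forall u, f x u = \sum_k l k * f (p k) u.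

Hypothesis f_comb : preserves_combinations.

Lemma conv_image x : (forall y, S y -> S' (f y)) -> conv S x -> conv S' (f x).
Proof.
move=> fS [m [p [l [Sp l_ge0 l_sum1 xE]]]].
by exists m, (fun k => f (p k)), l; split=> // [k | u]; [exact: fS | exact: f_comb].
Qed.

Lemma conv_preimage (g : (U -> R) -> T -> R) z :
  (forall y, S' y -> S (g y) /\ f (g y) = y) ->
  conv S' z -> exists x, conv S x /\ f x = z.
Proof.
move=> gK [m [q [l [S'q l_ge0 l_sum1 zE]]]].
exists (fun t => \sum_k l k * g (q k) t); split.
  by exists m, (fun k => g (q k)), l; split=> // k; case: (gK _ (S'q k)).
apply: functional_extensionality => u.
rewrite (@f_comb m (fun k => g (q k)) l) // zE.
by apply: eq_bigr => k _; case: (gK _ (S'q k)) => _ ->.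
Qed.

End ConvexImage.

Section Representatives.
Variables (R : realFieldType) (n : nat) (V : {set {set 'I_n}}).
Variables (E : {set {set {set 'I_n}}}) (ibar : {set 'I_n} -> 'I_n).
Hypothesis trivV : trivIset V.
Hypothesis ibarV : forall I, I \in V -> ibar I \in I.

Lemma block_eq I1 I2 i : I1 \in V -> I2 \in V -> i \in I1 -> i \in I2 -> I1 = I2.
Proof. by move=> V1 V2 i1 i2; rewrite -(def_pblock trivV V1 i1) (def_pblock trivV V2 i2). Qed.

Lemma ibar_inj : {in V &, injective ibar}.
Proof. by move=> I1 I2 V1 V2 eq12; apply: (block_eq V1 V2 (ibarV V1)); rewrite eq12 ibarV. Qed.

Definition reps (e : {set {set 'I_n}}) : {set 'I_n} := [set ibar I | I in e].

Lemma reps_cap (e : {set {set 'I_n}}) I : e \subset V -> I \in V ->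
  reps e :&: I = if I \in e then [set ibar I] else set0.
Proof.
move=> eV IV; apply/setP => i; rewrite inE.
apply/andP/idP => [[/imsetP [I' I'e ->] I'I] | ].
  have I'V := subsetP eV _ I'e.
  by rewrite -(block_eq I'V IV (ibarV I'V) I'I) I'e set11.
case: ifP => [Ie /set1P -> | _]; last by rewrite inE.
by split; [apply: imset_f | apply: ibarV].
Qed.

Lemma card_reps_cap (e : {set {set 'I_n}}) I : e \subset V -> I \in V ->
  #|reps e :&: I| = (I \in e).
Proof. by move=> eV IV; rewrite reps_cap //; case: ifP; rewrite ?cards1 ?cards0. Qed.

Lemma EJ_reps (e : {set {set 'I_n}}) : e \subset V -> EJ V (reps e) = e.
Proof.
move=> eV; apply/setP => I; rewrite inE.
case IV: (I \in V); last by apply/esym/negP => /(subsetP eV); rewrite IV.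
by rewrite card_reps_cap //; case: (I \in e).
Qed.

Lemma card_reps (e : {set {set 'I_n}}) : e \subset V -> #|reps e| = #|e|.
Proof. by move=> eV; apply: card_in_imset; apply: sub_in2 ibar_inj; apply/subsetP. Qed.

Lemma prod_reps (F : 'I_n -> R) (e : {set {set 'I_n}}) : e \subset V ->
  \prod_(i in reps e) F i = \prod_(I in e) F (ibar I).
Proof. by move=> eV; apply: big_imset; apply: sub_in2 ibar_inj; apply/subsetP. Qed.

Hypothesis edgeE : forall e, e \in E -> e \subset V /\ (2 <= #|e|)%N.

Lemma hyperedge_sub (e : {set {set 'I_n}}) : e \in LV V :|: E -> e \subset V.
Proof. by case/setUP => [/imsetP [I IV ->] | /edgeE []]; rewrite ?sub1set. Qed.

Lemma reps_in_JHR (e : {set {set 'I_n}}) : e \in LV V :|: E -> reps e \in JHR V E ibar.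
Proof.
move=> eH; have eV := hyperedge_sub eH.
rewrite inE imsetS // andbT; apply/bigcupP; exists e => //.
rewrite inE; apply/andP; split.
  apply/subsetP => _ /imsetP [I Ie ->].
  by apply/bigcupP; exists I; rewrite ?ibarV ?(subsetP eV).
by apply/forall_inP => I Ie; rewrite card_reps_cap ?Ie ?(subsetP eV).
Qed.

Lemma reps_in_JH (e : {set {set 'I_n}}) : e \in LV V :|: E -> reps e \in JH V E.
Proof. by move/reps_in_JHR; rewrite inE => /andP []. Qed.

Lemma JHR_reps (J : {set 'I_n}) :
  J \in JHR V E ibar -> exists2 e, e \in LV V :|: E & J = reps e.
Proof.
rewrite inE => /andP [/bigcupP [e eH]]; rewrite inE => /andP [Jcup /forall_inP J1] JR.
exists e => //; have eV := hyperedge_sub eH.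
have capJ I : I \in V -> J :&: I \subset [set ibar I].
  by move=> IV; have := reps_cap (subxx V) IV; rewrite IV => <-; apply: setSI.
apply/eqP; rewrite eqEsubset; apply/andP; split; apply/subsetP => i.
  move=> iJ; have /bigcupP [I Ie iI] := subsetP Jcup _ iJ.
  have /(subsetP (capJ I (subsetP eV _ Ie)))/set1P -> : i \in J :&: I by rewrite inE iJ.
  exact: imset_f.
case/imsetP => I Ie ->; have IV := subsetP eV _ Ie.
have /cards1P [j Jj] := J1 I Ie.
have jJI : j \in J :&: I by rewrite Jj set11.
have /set1P ej := subsetP (capJ I IV) j jJI.
by move: jJI; rewrite ej => /setIP [].
Qed.

Lemma EJ_JHR (J : {set 'I_n}) : J \in JHR V E ibar -> EJ V J \in LV V :|: E.
Proof. by case/JHR_reps => e eH ->; rewrite EJ_reps // hyperedge_sub. Qed.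

Lemma EJ_inj_JHR : {in JHR V E ibar &, injective (EJ V)}.
Proof.
move=> J1 J2 /JHR_reps [e1 e1H ->] /JHR_reps [e2 e2H ->].
by rewrite !EJ_reps ?hyperedge_sub // => ->.
Qed.

Lemma EJ_image_JHR : [set EJ V J | J in JHR V E ibar] = LV V :|: E.
Proof.
apply/setP => e; apply/imsetP/idP => [[J JR ->] | eH]; first exact: EJ_JHR.
by exists (reps e); rewrite ?reps_in_JHR ?EJ_reps ?hyperedge_sub.
Qed.

Local Notation zmap w := (phi V (JHR V E ibar) (proj (JHR V E ibar) w)).

Lemma zmapE (w : {set 'I_n} -> R) (e : {set {set 'I_n}}) :
  zmap w e = if e \in LV V :|: E then w (reps e) else 0.
Proof.
rewrite /phi; case: ifP => eH; last first.
  by rewrite big1 // => J /andP [JR /eqP EJe]; move: eH; rewrite -EJe EJ_JHR.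
rewrite (big_pred1 (reps e)) /proj ?reps_in_JHR // => J /=.
apply/andP/eqP => [[/JHR_reps [e' e'H ->] /eqP <-] | ->].
  by rewrite EJ_reps // hyperedge_sub.
by rewrite reps_in_JHR // EJ_reps ?hyperedge_sub.
Qed.

Lemma zmap_comb : preserves_combinations (fun w : {set 'I_n} -> R => zmap w).
Proof.
move=> m p l w wE e; rewrite zmapE; under eq_bigr => k _ do rewrite zmapE.
by case: ifP => _; rewrite ?wE // big1 // => k _; rewrite mulr0.
Qed.

Lemma zmap_inj_proj (w1 w2 : {set 'I_n} -> R) : zmap w1 = zmap w2 ->
  proj (JHR V E ibar) w1 = proj (JHR V E ibar) w2.
Proof.
move=> eqz; apply: functional_extensionality => J; rewrite /proj.
case: ifP => // /JHR_reps [e eH ->].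
by have := congr1 (fun z => z e) eqz; rewrite /= !zmapE eH.
Qed.

Lemma inMS_zmap (w : {set 'I_n} -> R) : inSH V E w -> inMS V E (zmap w).
Proof.
case=> _ w01 _ w_prod; split=> [e eH | e eH | e eE]; rewrite zmapE.
- by rewrite (negbTE eH).
- by rewrite eH; apply/w01/reps_in_JH.
have eH : e \in LV V :|: E by rewrite inE eE orbT.
have [eV e2] := edgeE eE.
rewrite eH w_prod ?reps_in_JH ?card_reps // prod_reps //; apply: eq_bigr => I Ie.
by rewrite zmapE inE imset_f ?(subsetP eV) //= /reps imset_set1.
Qed.

Hypothesis coverV : cover V = [set: 'I_n].
Hypothesis cardV : forall I, I \in V -> (2 <= #|I|)%N.

Lemma singleton_JH (i : 'I_n) : [set i] \in JH V E.
Proof.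
have /bigcupP [I IV iI] : i \in cover V by rewrite coverV inE.
apply/bigcupP; exists [set I]; first by rewrite !inE imset_f.
rewrite inE big_set1 sub1set iI; apply/forall_inP => _ /set1P ->.
by rewrite (setIidPl _) ?cards1 ?sub1set.
Qed.

Section Lift.
Variable q : {set {set 'I_n}} -> R.

Definition lift_choice (I : {set 'I_n}) : 'I_n :=
  if q [set I] == 1 then ibar I else odflt (ibar I) [pick j in I :\ ibar I].

Definition lift_support : {set 'I_n} := [set lift_choice I | I in V].

Definition lift (J : {set 'I_n}) : R := ((J \in JH V E) && (J \subset lift_support))%:R.

Lemma lift_choice_mem I : I \in V -> lift_choice I \in I.
Proof.
move=> IV; rewrite /lift_choice; case: ifP => _; first exact: ibarV.
by case: pickP => [j /setD1P [] | _] //=; apply: ibarV.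
Qed.

Lemma mem_lift_support I i : I \in V -> i \in I ->
  (i \in lift_support) = (i == lift_choice I).
Proof.
move=> IV iI; apply/imsetP/eqP => [[I' I'V iE] | ->]; last by exists I.
by rewrite iE (block_eq I'V IV (lift_choice_mem I'V)) -?iE.
Qed.

Lemma lift_singleton i : lift [set i] = (i \in lift_support)%:R.
Proof. by rewrite /lift singleton_JH sub1set. Qed.

Hypothesis qMS : inMS V E q.

Lemma lift_ibar I : I \in V -> lift [set ibar I] = q [set I].
Proof.
move=> IV; rewrite lift_singleton (mem_lift_support IV (ibarV IV)) /lift_choice.
case: ifP => [/eqP -> | /eqP q1]; first by rewrite eqxx.
have [_ q01 _] := qMS.
have [q0 | /q1 //] : q [set I] = 0 \/ q [set I] = 1 by apply: q01; rewrite !inE imset_f.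
rewrite q0; case: pickP => [j /setD1P [jI _] /= | none].
  by rewrite eq_sym (negbTE jI).
have := cardsD1 (ibar I) I; rewrite ibarV // (eq_card0 none) addn0 => I1.
by have := cardV IV; rewrite I1.
Qed.

Lemma inSH_lift : inSH V E lift.
Proof.
split=> [J /negbTE JH | J _ | I IV | J JH _].
- by rewrite /lift JH.
- by rewrite /lift; case: (_ && _); [right | left].
- under eq_bigr => i _ do rewrite lift_singleton.
  have cI := lift_choice_mem IV.
  rewrite (bigD1 (lift_choice I)) //= (mem_lift_support IV cI) eqxx.
  rewrite big1 ?addr0 // => i /andP [iI ne].
  by rewrite (mem_lift_support IV iI) (negbTE ne).
- under eq_bigr => i _ do rewrite lift_singleton.
  by rewrite prod_indicator /lift JH.
Qed.

Lemma zmap_lift : zmap lift = q.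
Proof.
have [q0 _ q_prod] := qMS.
apply: functional_extensionality => e; rewrite zmapE.
case: ifP => eH; last by rewrite q0 ?eH.
have eV := hyperedge_sub eH.
rewrite /lift reps_in_JH //= -prod_indicator prod_reps //.
rewrite (eq_bigr (fun I => q [set I])) => [|I Ie]; last first.
  by rewrite -lift_singleton lift_ibar ?(subsetP eV).
by case/setUP: eH => [/imsetP [I _ ->] | /q_prod <-]; rewrite ?big_set1.
Qed.
End Lift.

Lemma MC_zmap w : MC R V E w -> MP R V E (zmap w).
Proof. exact: (conv_image (f := fun w => zmap w) zmap_comb inMS_zmap). Qed.

Lemma MP_zmap_onto z : MP R V E z -> exists w, MC R V E w /\ zmap w = z.
Proof.
apply: (conv_preimage (f := fun w => zmap w) zmap_comb (g := lift)) => q qMS.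
by split; [apply: inSH_lift | apply: zmap_lift].
Qed.
End Representatives.

Theorem proposition2p1 (R : realFieldType) (n : nat)
  (V : {set {set 'I_n}}) (E : {set {set {set 'I_n}}})
  (ibar : {set 'I_n} -> 'I_n) :
  (0 < n)%N ->
  partition V [set: 'I_n] ->
  (forall I, I \in V -> (2 <= #|I|)%N) ->
  (forall e, e \in E -> e \subset V /\ (2 <= #|e|)%N) ->
  (forall I, I \in V -> ibar I \in I) ->
  [/\ {in JHR V E ibar &, injective (EJ V)},
      [set EJ V J | J in JHR V E ibar] = LV V :|: E,
      (forall w, MC R V E w -> MP R V E (phi V (JHR V E ibar) (proj (JHR V E ibar) w))),
      (forall w1 w2, MC R V E w1 -> MC R V E w2 ->
         phi V (JHR V E ibar) (proj (JHR V E ibar) w1)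
         = phi V (JHR V E ibar) (proj (JHR V E ibar) w2) ->
         proj (JHR V E ibar) w1 = proj (JHR V E ibar) w2)
    & (forall z, MP R V E z ->
         exists w, MC R V E w /\ phi V (JHR V E ibar) (proj (JHR V E ibar) w) = z)].
Proof.
move=> _ /and3P [/eqP coverV trivV _] cardV edgeE ibarV.
split=> [||w|w1 w2 _ _|z].
- exact: EJ_inj_JHR.
- exact: EJ_image_JHR.
- exact: MC_zmap.
- exact: zmap_inj_proj.
- exact: MP_zmap_onto.
Qed.
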